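(* Let $S$ be a polynomial ring over a field, $t$ a positive integer, $I\subseteq S$ an ideal and $\sigma$ a term order such that $\operatorname{in}_\sigma(I)$ is a squarefree monomial ideal (so that $I$ is radical and $I=\bigcap_{\mathfrak p\in\operatorname{Min}(I)}\mathfrak p$). Suppose that: (a) $\operatorname{in}_\sigma(\mathfrak p)$ is a squarefree monomial ideal for each $\mathfrak p\in\operatorname{Min}(I)$; (b) $(\operatorname{in}_\sigma(I))^{(t)}=(\operatorname{in}_\sigma(I))^t$; (c) $\operatorname{in}_\sigma(\mathfrak p^{(t)})=(\operatorname{in}_\sigma(\mathfrak p))^{(t)}$ for each $\mathfrak p\in\operatorname{Min}(I)$; (d) $\operatorname{in}_\sigma(I)=\bigcap_{\mathfrak p\in\operatorname{Min}(I)}\operatorname{in}_\sigma(\mathfrak p)$. Then $I^{(t)}=I^t$.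
   Context: $\operatorname{Min}(I)$ is the set of minimal primes of $I$; $I^{(t)}=\bigcap_{\mathfrak p\in\operatorname{Ass}(I)}(I^tS_{\mathfrak p}\cap S)$ is the $t$-th symbolic power; $\operatorname{in}_\sigma$ denotes the initial ideal. *)

From HB Require Import structures.
From mathcomp Require Import all_boot all_order all_algebra.
From mathcomp Require Import mpoly.
Set Implicit Arguments.
Unset Strict Implicit.
Unset Printing Implicit Defensive.
Import GRing.Theory.
Local Open Scope ring_scope.

Section Ideals.
Variable R : comNzRingType.

Definition subI (A B : R -> Prop) : Prop := forall x, A x -> B x.
Definition eqI (A B : R -> Prop) : Prop := forall x, A x <-> B x.

Definition is_ideal (I : R -> Prop) : Prop :=
  [/\ I 0, (forall x y, I x -> I y -> I (x + y)) & (forall r x, I x -> I (r * x))].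

Definition is_prime (P : R -> Prop) : Prop :=
  [/\ is_ideal P, ~ P 1 & (forall x y, P (x * y) -> P x \/ P y)].

Definition gen_ideal (G : R -> Prop) : R -> Prop := fun x =>
  exists k (r g : 'I_k -> R), (forall i, G (g i)) /\ x = \sum_(i < k) r i * g i.

Definition prod_ideal (J K : R -> Prop) : R -> Prop := fun x =>
  exists k (a b : 'I_k -> R), (forall i, J (a i)) /\ (forall i, K (b i)) /\
    x = \sum_(i < k) a i * b i.

Fixpoint pow_ideal (I : R -> Prop) (t : nat) : R -> Prop :=
  match t with
  | 0 => fun _ => True
  | t'.+1 => prod_ideal (pow_ideal I t') I
  end.

Definition colon (I : R -> Prop) (f : R) : R -> Prop := fun x => I (x * f).

Definition Ass (I : R -> Prop) (P : R -> Prop) : Prop :=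
  is_prime P /\ exists f, eqI P (colon I f).

Definition Min (I : R -> Prop) (P : R -> Prop) : Prop :=
  [/\ is_prime P, subI I P &
      (forall Q, is_prime Q -> subI I Q -> subI Q P -> subI P Q)].

(* I^t S_p ∩ S = { f | exists s ∉ p, s f ∈ I^t } *)
Definition loc_contr (J P : R -> Prop) : R -> Prop := fun x =>
  exists s, ~ P s /\ J (s * x).

Definition symb_pow (I : R -> Prop) (t : nat) : R -> Prop := fun x =>
  forall P, Ass I P -> loc_contr (pow_ideal I t) P x.

End Ideals.

Section TermOrder.
Variables (n : nat) (F : fieldType).

Definition term_order (le : rel 'X_{1..n}) : Prop :=
  [/\ reflexive le, antisymmetric le, transitive le & total le] /\
  (forall m, le 0%MM m) /\
  (forall m1 m2 m, le m1 m2 -> le (m1 + m)%MM (m2 + m)%MM).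

(* m is the leading (initial) monomial of f w.r.t. le (forces f != 0) *)
Definition is_lead (le : rel 'X_{1..n}) (f : {mpoly F[n]}) (m : 'X_{1..n}) :=
  m \in msupp f /\ forall m', m' \in msupp f -> le m' m.

Definition init_ideal (le : rel 'X_{1..n}) (I : {mpoly F[n]} -> Prop) :
    {mpoly F[n]} -> Prop :=
  gen_ideal (fun g => exists f m, I f /\ is_lead le f m /\ g = 'X_[m]).

Definition squarefree_mon (m : 'X_{1..n}) : Prop := forall i, (m i <= 1)%N.

Definition sqfree_monomial_ideal (J : {mpoly F[n]} -> Prop) : Prop :=
  exists G : 'X_{1..n} -> Prop, (forall m, G m -> squarefree_mon m) /\
    eqI J (gen_ideal (fun g => exists m, G m /\ g = 'X_[m])).

End TermOrder.

(* Comparing leading monomials, in(I) = ∩ in(p) over the minimal primes p forces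
   I = ∩ p, so in the Noetherian ring S every minimal prime of I is associated.
   Let f ∈ I^(t) have leading monomial m. For each minimal prime p, f ∈ p^(t), so
   X^m ∈ in(p^(t)) = in(p)^(t). An associated prime Q = (in(I) : g) of in(I)
   contains (in(p) : g) for some p: otherwise, since there are only finitely many
   squarefree monomial ideals, finitely many witnesses multiply to some u ∉ Q with
   u g ∈ ∩ in(p) = in(I). Since in(I) is radical, g ∉ Q, and g in(p) ⊆ in(I), so the
   localisation of X^m at Q lands in in(I)^t. Hence in(I^(t)) ⊆ in(I)^(t) =
   in(I)^t ⊆ in(I^t), which together with I^t ⊆ I^(t) gives I^(t) = I^t. *)

From HB Require Import structures.
From mathcomp Require Import all_boot all_order all_algebra.
From mathcomp Require Import mpoly.
From mathcomp Require Import ring zify.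
From Stdlib Require Import Classical ClassicalEpsilon.
Set Implicit Arguments.
Unset Strict Implicit.
Unset Printing Implicit Defensive.
Import GRing.Theory.

Lemma exists_tail_min (a : nat -> nat) k :
  exists j, k <= j /\ forall j', k <= j' -> a j <= a j'.
Proof.
suff H v : (exists j, k <= j /\ a j <= v) ->
    exists j, k <= j /\ forall j', k <= j' -> a j <= a j'.
  by apply: (H (a k)); exists k.
elim: v => [|v IH] [j [hj hv]].
  by exists j; split => // j' _; move: hv; rewrite leqn0 => /eqP ->.
have [|hn] := classic (exists j, k <= j /\ a j <= v); first exact: IH.
exists j; split => // j' hj'; apply: (leq_trans hv).
by rewrite leqNgt; apply/negP => h; apply: hn; exists j'.
Qed.

Lemma exists_nondecreasing_subseq (a : nat -> nat) : exists phi : nat -> nat,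
  (forall i, phi i < phi i.+1) /\ (forall i, a (phi i) <= a (phi i.+1)).
Proof.
have tmin k : {j | k <= j /\ forall j', k <= j' -> a j <= a j'}.
  exact/constructive_indefinite_description/exists_tail_min.
pose fix phi i := if i is i'.+1 then sval (tmin (phi i').+1) else sval (tmin 0).
have phi_incr i : phi i < phi i.+1 by case: (svalP (tmin (phi i).+1)).
have phi_min i : exists2 k, k <= phi i & forall j, k <= j -> a (phi i) <= a j.
  case: i => [|i] /=.
    by exists 0 => //; apply: (svalP (tmin 0)).2.
  by exists (phi i).+1; [apply: phi_incr|apply: (svalP (tmin _)).2].
exists phi; split => // i; have [k le_k min_k] := phi_min i; apply: min_k.
exact: leq_trans le_k (ltnW (phi_incr i)).
Qed.

Lemma dickson_on n (s : nat -> 'X_{1..n}) (l : seq 'I_n) : exists phi : nat -> nat,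
  (forall i, phi i < phi i.+1) /\
  forall j, j \in l -> forall i, s (phi i) j <= s (phi i.+1) j.
Proof.
elim: l => [|j l [phi [phi_incr phi_mono]]]; first by exists id.
have [psi [psi_incr psi_mono]] :=
  exists_nondecreasing_subseq (fun i => s (phi i) j).
exists (phi \o psi); split => [i|j']; first exact: (homo_ltn ltn_trans phi_incr).
rewrite inE => /orP [/eqP -> //|/phi_mono mono_j'] i.
exact: (homo_leq (f := fun k => s (phi k) j') leqnn leq_trans mono_j'
  (ltnW (psi_incr i))).
Qed.

Lemma dickson n (s : nat -> 'X_{1..n}) : exists i j, i < j /\ (s i <= s j)%MM.
Proof.
have [phi [phi_incr phi_mono]] := dickson_on s (enum 'I_n).
exists (phi 0), (phi 1); split => //.
by apply/mnm_lepP => i; apply: phi_mono; rewrite mem_enum.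
Qed.

Local Open Scope ring_scope.

Section Ideals.
Variable R : comNzRingType.
Implicit Types (I J K M N P Q G : R -> Prop).

Definition semiprime I := forall x, I (x * x) -> I x.

Definition min_meet I : R -> Prop := fun x => forall P, Min I P -> P x.

Definition cat_fun (A : Type) k1 k2 (f1 : 'I_k1 -> A) (f2 : 'I_k2 -> A) :
  'I_(k1 + k2) -> A := fun i => match split i with inl j => f1 j | inr j => f2 j end.

Lemma cat_funP (A : Type) (Pr : A -> Prop) k1 k2 (f1 : 'I_k1 -> A) (f2 : 'I_k2 -> A) :
  (forall i, Pr (f1 i)) -> (forall i, Pr (f2 i)) -> forall i, Pr (cat_fun f1 f2 i).
Proof. by move=> h1 h2 i; rewrite /cat_fun; case: split. Qed.

Lemma sum_cat_fun k1 k2 (f1 g1 : 'I_k1 -> R) (f2 g2 : 'I_k2 -> R) :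
  \sum_(i < k1 + k2) cat_fun f1 f2 i * cat_fun g1 g2 i =
  \sum_(i < k1) f1 i * g1 i + \sum_(i < k2) f2 i * g2 i.
Proof.
rewrite big_split_ord /cat_fun.
by congr (_ + _); apply: eq_bigr => i _; rewrite ?(unsplitK (inl _ i)) ?(unsplitK (inr _ i)).
Qed.

Lemma idealMr I x r : is_ideal I -> I x -> I (x * r).
Proof. by case=> _ _ hM hx; rewrite mulrC; apply: hM. Qed.

Lemma idealB I x y : is_ideal I -> I x -> I y -> I (x - y).
Proof. by case=> _ hD hM hx hy; apply: hD => //; rewrite -mulN1r; apply: hM. Qed.

Lemma ideal_sum I k (F : 'I_k -> R) : is_ideal I -> (forall i, I (F i)) ->
  I (\sum_(i < k) F i).
Proof. by case=> h0 hD _ hF; elim/big_ind: _. Qed.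

Lemma is_ideal_eqI I J : eqI I J -> is_ideal I -> is_ideal J.
Proof.
move=> e [h0 hD hM]; split; first exact/e.
  by move=> x y /e hx /e hy; apply/e; apply: hD.
by move=> r x /e hx; apply/e; apply: hM.
Qed.

Lemma gen_ideal_ideal G : is_ideal (gen_ideal G).
Proof.
split.
- by exists 0%N, (fun _ => 0), (fun _ => 0); split; [case|rewrite big_ord0].
- move=> x y [k1 [r1 [g1 [h1 ->]]]] [k2 [r2 [g2 [h2 ->]]]].
  exists (k1 + k2)%N, (cat_fun r1 r2), (cat_fun g1 g2).
  by split; [exact: cat_funP|rewrite sum_cat_fun].
- move=> r x [k [r1 [g1 [h1 ->]]]]; exists k, (fun i => r * r1 i), g1.
  by split => //; rewrite mulr_sumr; apply: eq_bigr => i _; rewrite mulrA.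
Qed.

Lemma gen_ideal_gen G g : G g -> gen_ideal G g.
Proof.
by move=> hg; exists 1%N, (fun _ => 1), (fun _ => g); rewrite big_ord1 mul1r.
Qed.

Lemma gen_ideal_min G J : is_ideal J -> (forall g, G g -> J g) ->
  subI (gen_ideal G) J.
Proof.
move=> hJ hG x [k [r [g [hg ->]]]]; apply: ideal_sum => // i.
by case: hJ => _ _ hM; apply/hM/hG.
Qed.

Lemma colon_ideal I f : is_ideal I -> is_ideal (colon I f).
Proof.
case=> h0 hD hM; split; rewrite /colon.
- by rewrite mul0r.
- by move=> x y hx hy; rewrite mulrDl; apply: hD.
- by move=> r x hx; rewrite -mulrA; apply: hM.
Qed.

Lemma gen_ideal_mul G1 G2 J x y : is_ideal J ->
  (forall a b, G1 a -> G2 b -> J (a * b)) -> gen_ideal G1 x -> gen_ideal G2 y ->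
  J (x * y).
Proof.
move=> hJ hG hx hy; rewrite mulrC; move: y hy; apply: gen_ideal_min.
  exact: colon_ideal.
move=> b hb; rewrite /colon mulrC; move: x hx; apply: gen_ideal_min.
  exact: colon_ideal.
by move=> a ha; apply: hG.
Qed.

Lemma prod_ideal_ideal J K : is_ideal J -> is_ideal (prod_ideal J K).
Proof.
case=> _ _ hJM; split.
- by exists 0%N, (fun _ => 0), (fun _ => 0); do 2?split; [case|case|rewrite big_ord0].
- move=> x y [k1 [a1 [b1 [ha1 [hb1 ->]]]]] [k2 [a2 [b2 [ha2 [hb2 ->]]]]].
  exists (k1 + k2)%N, (cat_fun a1 a2), (cat_fun b1 b2).
  by do 2?split; [exact: cat_funP|exact: cat_funP|rewrite sum_cat_fun].
- move=> r x [k [a [b [ha [hb ->]]]]]; exists k, (fun i => r * a i), b.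
  split=> [i|]; first exact: hJM.
  by split=> //; rewrite mulr_sumr; apply: eq_bigr => i _; rewrite mulrA.
Qed.

Lemma prod_ideal_mul J K a b : J a -> K b -> prod_ideal J K (a * b).
Proof. by move=> ha hb; exists 1%N, (fun _ => a), (fun _ => b); rewrite big_ord1. Qed.

Lemma prod_ideal_mono J J' K K' : subI J J' -> subI K K' ->
  subI (prod_ideal J K) (prod_ideal J' K').
Proof.
move=> hJ hK x [k [a [b [ha [hb ->]]]]].
by exists k, a, b; split=> [i|]; [apply: hJ|split=> // i; apply: hK].
Qed.

Lemma pow_ideal_ideal I t : is_ideal (pow_ideal I t).
Proof. by elim: t => [|t IH] /=; [split|exact: prod_ideal_ideal]. Qed.

Lemma pow_ideal_mono I J t : subI I J -> subI (pow_ideal I t) (pow_ideal J t).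
Proof. by move=> h; elim: t => [|t IH] //=; apply: prod_ideal_mono. Qed.

Lemma pow_ideal_scale J J' u t x : (forall y, J' y -> J (u * y)) ->
  pow_ideal J' t x -> pow_ideal J t (u ^+ t * x).
Proof.
move=> hu; elim: t x => [|t IH] x //= [k [a [b [ha [hb ->]]]]].
exists k, (fun i => u ^+ t * a i), (fun i => u * b i).
split=> [i|]; first exact: IH.
split=> [i|]; first exact: hu.
by rewrite mulr_sumr; apply: eq_bigr => i _; rewrite exprSr mulrACA.
Qed.

Lemma prime_notM P a b : is_prime P -> ~ P a -> ~ P b -> ~ P (a * b).
Proof. by case=> _ _ hP ha hb /hP []. Qed.

Lemma prime_notX P a k : is_prime P -> ~ P a -> ~ P (a ^+ k).
Proof.
move=> hP ha; elim: k => [|k IH]; first by rewrite expr0; case: hP.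
by rewrite exprS; apply: prime_notM.
Qed.

Lemma primeX P a k : is_prime P -> P (a ^+ k) -> P a.
Proof. by move=> hP PX; apply: NNPP => nPa; apply: prime_notX hP nPa PX. Qed.

Lemma loc_contr_ideal J P : is_ideal J -> is_prime P -> is_ideal (loc_contr J P).
Proof.
move=> [hJ0 hJD hJM] hP; split.
- by exists 1; split; [case: hP|rewrite mulr0].
- move=> x y [s1 [hs1 h1]] [s2 [hs2 h2]].
  exists (s1 * s2); split; first exact: prime_notM.
  rewrite mulrDr; apply: hJD; first by rewrite mulrAC mulrC; apply: hJM.
  by rewrite -mulrA; apply: hJM.
- by move=> r x [s [hs h]]; exists s; split => //; rewrite mulrCA; apply: hJM.
Qed.

Lemma min_meet_ideal I : is_ideal (min_meet I).
Proof.
split.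
- by move=> P [[[P0 _ _] _ _] _ _].
- move=> x y hx hy P hP; case: (hP) => [[[_ PD _] _ _] _ _].
  by apply: PD; [apply: hx|apply: hy].
- by move=> r x hx P hP; case: (hP) => [[[_ _ PM] _ _] _ _]; apply: PM; apply: hx.
Qed.

Lemma symb_pow_ideal I t : is_ideal (symb_pow I t).
Proof.
have hL P : Ass I P -> is_ideal (loc_contr (pow_ideal I t) P).
  by case=> hP _; apply: loc_contr_ideal (pow_ideal_ideal I t) hP.
split => [P /hL []//|x y hx hy P hP|r x hx P hP].
  by case: (hL P hP) => _ hD _; apply: hD; [apply: hx|apply: hy].
by case: (hL P hP) => _ _ hM; apply: hM; apply: hx.
Qed.

Lemma pow_sub_symb I t : subI (pow_ideal I t) (symb_pow I t).
Proof. by move=> x hx P [[_ hP1 _] _]; exists 1; rewrite mul1r. Qed.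

Lemma Ass_prime P Q : is_prime P -> Ass P Q -> eqI Q P.
Proof.
move=> [[_ _ hPM] _ hP] [[_ hQ1 _] [f e]].
have nPf : ~ P f by move=> Pf; apply/hQ1/e; rewrite /colon mul1r.
move=> x; split => [/e /hP []//|Px]; apply/e.
by rewrite /colon mulrC; apply: hPM.
Qed.

Lemma symb_pow_sub_prime I P t : is_prime P -> subI I P -> Ass I P ->
  subI (symb_pow I t) (symb_pow P t).
Proof.
move=> hP hIP hA x hx Q hQ; have eQP := Ass_prime hP hQ.
have [s [nPs hs]] := hx P hA.
by exists s; split; [move/eQP|apply: pow_ideal_mono hs].
Qed.

(* g ∉ Q as M is semiprime, and g N ⊆ M; so g^t s localises x into M^t. *)
Lemma symb_pow_colon M N Q g t x : is_ideal N -> subI M N -> semiprime M ->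
  is_prime Q -> eqI Q (colon M g) -> subI (colon N g) Q ->
  symb_pow N t x -> loc_contr (pow_ideal M t) Q x.
Proof.
move=> hN hMN hM hQ eQ hNQ hx.
have [_ _ hNM] := hN.
have nQg : ~ Q g.
  move=> /(eQ g).1 /hM Mg; case: hQ => _ + _; apply; apply/(eQ 1).2.
  by rewrite /colon mul1r.
have AssNQ : Ass N Q.
  split => //; exists g => z; split => [/eQ /hMN //|]; exact: hNQ.
have gN y : N y -> M (g * y).
  by move=> Ny; rewrite mulrC; apply/eQ/hNQ; rewrite /colon mulrC; apply: hNM.
have [s [nQs hs]] := hx Q AssNQ.
exists (g ^+ t * s); split; first by apply: prime_notM => //; apply: prime_notX.
by rewrite -mulrA; apply: pow_ideal_scale hs.
Qed.

End Ideals.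

Section Noetherian.
Variable R : comNzRingType.
Implicit Types (I J P Q : R -> Prop).

Definition acc_ideals : Prop := forall c : nat -> R -> Prop,
  (forall k, is_ideal (c k)) -> (forall k, subI (c k) (c k.+1)) ->
  exists k, subI (c k.+1) (c k).

Hypothesis acc : acc_ideals.

Lemma acc_exists_maximal (Fam : (R -> Prop) -> Prop) :
  (forall J, Fam J -> is_ideal J) -> (exists J, Fam J) ->
  exists J, Fam J /\ forall J', Fam J' -> subI J J' -> subI J' J.
Proof.
move=> hI [J0 hJ0]; apply: NNPP => hn.
have step (x : {J | Fam J}) :
    {y : {J | Fam J} | subI (sval x) (sval y) /\ ~ subI (sval y) (sval x)}.
  case: x => J hJ; apply: constructive_indefinite_description.
  apply: NNPP => hn2; apply: hn; exists J; split => // J' hJ' hs.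
  by apply: NNPP => hns; apply: hn2; exists (exist _ J' hJ').
pose c k := iter k (fun x => sval (step x)) (exist _ J0 hJ0).
have [k hk] := acc (fun k => hI _ (svalP (c k))) (fun k => (svalP (step (c k))).1).
exact: (svalP (step (c k))).2.
Qed.

(* A maximal ideal among those containing I and missing T is prime. *)
Lemma exists_prime_disjoint I (T : R -> Prop) : is_ideal I ->
  (forall a b, T a -> T b -> T (a * b)) -> (exists x, T x) ->
  (forall x, T x -> ~ I x) ->
  exists Q, [/\ is_prime Q, subI I Q & forall x, T x -> ~ Q x].
Proof.
move=> hI hT [x0 hx0] hdis.
pose Fam J := [/\ is_ideal J, subI I J & forall x, T x -> ~ J x].
have [|Q [[hQi hIQ hQT] hmax]] := @acc_exists_maximal Fam (fun J => fun '(And3 h _ _) => h).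
  by exists I; split => // x.
exists Q; split => //; split => // [hQ1|a b hab].
  by apply: (hQT x0 hx0); rewrite -[x0]mul1r; apply: idealMr hQi hQ1.
apply: NNPP => /not_or_and [na nb].
pose Qa c z := exists q r, Q q /\ z = q + r * c.
have Qa_ideal c : is_ideal (Qa c).
  case: hQi => h0 hD hM; split.
  - by exists 0, 0; rewrite mul0r addr0.
  - move=> x y [q1 [r1 [h1 ->]]] [q2 [r2 [h2 ->]]].
    by exists (q1 + q2), (r1 + r2); split; [apply: hD|rewrite mulrDl addrACA].
  - move=> r x [q1 [r1 [h1 ->]]].
    by exists (r * q1), (r * r1); split; [apply: hM|rewrite mulrDr mulrA].
have meets c : ~ Q c -> exists2 z, T z & Qa c z.
  move=> nQc; apply: NNPP => hn; apply: nQc; apply: (hmax (Qa c)).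
  - split => // [z /hIQ Qz|z Tz Qaz]; first by exists z, 0; rewrite mul0r addr0.
    by apply: hn; exists z.
  - by move=> z Qz; exists z, 0; rewrite mul0r addr0.
  - by exists 0, 1; split; [case: hQi|rewrite add0r mul1r].
have [z1 Tz1 [q1 [r1 [hq1 e1]]]] := meets a na.
have [z2 Tz2 [q2 [r2 [hq2 e2]]]] := meets b nb.
apply: (hQT _ (hT _ _ Tz1 Tz2)).
have -> : z1 * z2 = q1 * z2 + r1 * (q2 * a) + r1 * r2 * (a * b).
  by rewrite e1 e2; ring.
case: hQi => h0 hD hM; apply: (hD); first apply: (hD).
- by rewrite mulrC; apply: hM.
- by apply: (hM); rewrite mulrC; apply: hM.
- exact: hM.
Qed.

Lemma min_sub_loc_contr I p : is_ideal I -> subI (min_meet I) I -> Min I p ->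
  subI p (loc_contr I p).
Proof.
move=> hI hrad hp x px; apply: NNPP => hn.
have [hpP hIp hpmin] := hp.
pose T z := exists s k, ~ p s /\ z = s * x ^+ k.
have hT a b : T a -> T b -> T (a * b).
  move=> [s1 [k1 [h1 ->]]] [s2 [k2 [h2 ->]]]; exists (s1 * s2), (k1 + k2)%N.
  by split; [apply: prime_notM|rewrite exprD; ring].
have hdis z : T z -> ~ I z.
  move=> [s [[|k] [ps ->]]] Iz.
    by apply/ps/hIp; rewrite expr0 mulr1 in Iz.
  apply: hn; exists s; split => //; apply: hrad => Q [hQ hIQ _].
  apply: (primeX (k := k.+1) hQ); apply: hIQ.
  by rewrite exprMn exprS -mulrA mulrCA; case: hI => _ _; apply.
have [|Q [hQ hIQ hQT]] := exists_prime_disjoint hI hT _ hdis.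
  by exists 1, 1, 0%N; split; [case: hpP|rewrite mulr1].
have hQp : subI Q p.
  move=> y Qy; apply: NNPP => npy; apply: (hQT y) => //.
  by exists y, 0%N; rewrite expr0 mulr1.
apply: (hQT x); first by exists 1, 1%N; split; [case: hpP|rewrite mul1r expr1].
exact: hpmin Q hQ hIQ hQp _ px.
Qed.

Lemma Min_Ass I p : is_ideal I -> subI (min_meet I) I -> Min I p -> Ass I p.
Proof.
move=> hI hrad hp; have [hpP hIp _] := hp.
pose Fam J := exists2 g, ~ p g & J = colon I g.
have FamI J : Fam J -> is_ideal J by case=> g _ ->; apply: colon_ideal.
have [|J [[f npf ->] hmax]] := acc_exists_maximal FamI.
  by exists (colon I 1), 1 => //; case: hpP.
split => //; exists f => x; split => [px|Ifx]; last first.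
  by case: hpP => _ _ /(_ _ _ (hIp _ Ifx)) [].
have [s [nps Isx]] := min_sub_loc_contr hI hrad hp px.
apply: (hmax (colon I (f * s))).
- by exists (f * s) => //; apply: prime_notM.
- by move=> z Izf; rewrite /colon mulrA; apply: idealMr.
- by rewrite /colon mulrA mulrAC (mulrC x); apply: idealMr.
Qed.

End Noetherian.

Section TermOrder.
Variables (n : nat) (F : fieldType) (le : rel 'X_{1..n}).
Hypothesis hto : term_order le.

Lemma le_refl m : le m m.
Proof. by case: hto => [[h _ _ _] _]. Qed.

Lemma le_anti m1 m2 : le m1 m2 -> le m2 m1 -> m1 = m2.
Proof. by case: hto => [[_ h _ _] _] a b; apply: h; rewrite a b. Qed.

Lemma le_trans m2 m1 m3 : le m1 m2 -> le m2 m3 -> le m1 m3.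
Proof. by case: hto => [[_ _ h _] _]; apply: h. Qed.

Lemma le_total m1 m2 : le m1 m2 || le m2 m1.
Proof. by case: hto => [[_ _ _ h] _]. Qed.

Lemma le_addr m1 m2 m : le m1 m2 -> le (m1 + m)%MM (m2 + m)%MM.
Proof. by case: hto => [_ [_ h]]; apply: h. Qed.

Lemma le_addl m1 m2 m : le m1 m2 -> le (m + m1)%MM (m + m2)%MM.
Proof. by rewrite ![(m + _)%MM]addmC; apply: le_addr. Qed.

Lemma le_add m1 m2 m3 m4 : le m1 m2 -> le m3 m4 -> le (m1 + m3)%MM (m2 + m4)%MM.
Proof. by move=> h1 h2; apply: (le_trans (le_addr m3 h1)); apply: le_addl. Qed.

Lemma lem_le m1 m2 : (m1 <= m2)%MM -> le m1 m2.
Proof.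
move=> h; rewrite -(submK h) -{1}(add0m m1); apply: le_addr.
by case: hto => [_ []].
Qed.

Lemma le_add_lt m1 m2 m3 m4 : le m1 m2 -> m1 != m2 -> le m3 m4 ->
  (m1 + m3)%MM != (m2 + m4)%MM.
Proof.
move=> h1 ne h2; apply: contra_neq ne => e.
apply: (@addIm _ m4); apply: le_anti; first exact: le_addr.
by rewrite -e; apply: le_addl.
Qed.

Definition lt_mon m1 m2 := le m1 m2 && (m1 != m2).

Lemma lt_mon_trans m2 m1 m3 : lt_mon m1 m2 -> lt_mon m2 m3 -> lt_mon m1 m3.
Proof.
move=> /andP [h1 n1] /andP [h2 n2]; apply/andP; split; first exact: le_trans h2.
by apply: contra_neq n1 => e; move: h2; rewrite -e; apply: le_anti h1.
Qed.

(* A descending chain s contradicts Dickson's lemma, as (s i <= s j)%MM forces le (s i) (s j). *)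
Lemma lt_mon_wf : well_founded lt_mon.
Proof.
move=> m0; apply: NNPP => hn.
have step (x : {m | ~ Acc lt_mon m}) : {y : {m | ~ Acc lt_mon m} | lt_mon (sval y) (sval x)}.
  case: x => m hm; apply: constructive_indefinite_description.
  apply: NNPP => hn2; apply: (hm); constructor => y hy; apply: NNPP => hy'.
  by apply: hn2; exists (exist _ y hy').
pose s k := sval (iter k (fun x => sval (step x)) (exist _ m0 hn)).
have s_decr i j : (i < j)%N -> lt_mon (s j) (s i).
  apply: (homo_ltn (r := fun a b => lt_mon b a)) => [y x z h1 h2|k].
    exact: lt_mon_trans h2 h1.
  exact: (svalP (step _)).
have [i [j [lt_ij le_ij]]] := dickson s.
have /andP [le_ji] := s_decr _ _ lt_ij.
by rewrite (le_anti le_ji (lem_le le_ij)) eqxx.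
Qed.

Implicit Types (f g : {mpoly F[n]}).

Lemma seq_le_max (s : seq 'X_{1..n}) : s != [::] ->
  exists2 m, m \in s & forall m', m' \in s -> le m' m.
Proof.
elim: s => [//|x s IH] _; case: (eqVneq s [::]) => [->|/IH [m ms mmax]].
  by exists x => [|m']; rewrite ?inE // => /eqP ->; apply: le_refl.
case/orP: (le_total x m) => hxm.
  by exists m => [|m']; rewrite inE ?ms ?orbT // => /orP [/eqP ->|/mmax].
exists x => [|m']; rewrite inE ?eqxx // => /orP [/eqP ->|/mmax h].
  exact: le_refl.
exact: le_trans hxm.
Qed.

Lemma lead_ex f : f != 0 -> exists m, is_lead le f m.
Proof. by rewrite -msupp_eq0 => /seq_le_max [m ms mmax]; exists m. Qed.

Lemma lead_coef_neq0 f m : is_lead le f m -> f@_m != 0.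
Proof. by case; rewrite mcoeff_msupp. Qed.

Lemma lead_X m : is_lead le ('X_[m] : {mpoly F[n]}) m.
Proof.
split=> [|m']; first by rewrite msuppX inE.
by rewrite msuppX inE => /eqP ->; apply: le_refl.
Qed.

Lemma lead_MX f m d : is_lead le f m -> is_lead le (f * 'X_[d]) (d + m)%MM.
Proof.
case=> fm fmax; have supp_fX := perm_mem (msuppMX f d); split.
  by rewrite supp_fX; apply/mapP; exists m.
move=> m''; rewrite supp_fX => /mapP [m' m'f ->].
by apply: le_addl; apply: fmax.
Qed.

Lemma lead_M f g a b : is_lead le f a -> is_lead le g b ->
  is_lead le (f * g) (a + b)%MM.
Proof.
move=> fa gb; have [_ fmax] := fa; have [_ gmax] := gb.
have le_ab m : m \in msupp (f * g) -> le m (a + b)%MM.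
  by move/msuppM_le/allpairsP => [[m1 m2] [m1f m2g ->]]; apply: le_add;
    [apply: fmax|apply: gmax].
split => //; pose f1 := f - f@_a *: 'X_[a].
have f1_lt m : m \in msupp f1 -> le m a /\ m != a.
  rewrite mcoeff_msupp /f1 mcoeffB mcoeffZ mcoeffX.
  case: (eqVneq a m) => [->|ne]; first by rewrite mulr1 subrr eqxx.
  by rewrite mulr0 subr0 -mcoeff_msupp => mf; split => //; apply: fmax.
(* Only the product of the two leading terms contributes to the coefficient of a + b *)
have -> : f = f@_a *: 'X_[a] + f1 by rewrite /f1 addrC subrK.
rewrite mcoeff_msupp mulrDl mcoeffD -scalerAl mcoeffZ [('X_[a] * g)]mulrC mcoeffMX.
have -> : (f1 * g)@_(a + b)%MM = 0.
  apply: memN_msupp_eq0; apply/negP => /msuppM_le /allpairsP [[m1 m2] [m1f m2g /= e]].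
  have [le_m1 ne_m1] := f1_lt _ m1f.
  by have := le_add_lt le_m1 ne_m1 (gmax _ m2g); rewrite e eqxx.
by rewrite addr0 mulf_neq0 // lead_coef_neq0.
Qed.

Lemma lead_cancel f g a : is_lead le f a -> is_lead le g a ->
  forall m, m \in msupp (f - (f@_a / g@_a) *: g) -> lt_mon m a.
Proof.
move=> [_ fmax] ga m; have [_ gmax] := ga; have ga0 := lead_coef_neq0 ga.
rewrite mcoeff_msupp mcoeffB mcoeffZ => hm; apply/andP; split; last first.
  by apply: contra_neq hm => ->; rewrite mulfVK // subrr.
case: (eqVneq f@_m 0) => [f0|]; last by rewrite -mcoeff_msupp; apply: fmax.
move: hm; rewrite f0 sub0r oppr_eq0 mulf_eq0 negb_or => /andP [_].
by rewrite -mcoeff_msupp; apply: gmax.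
Qed.

End TermOrder.

Lemma monomial_ideal_supp n (F : fieldType) (Gen : {mpoly F[n]} -> Prop)
    (G : 'X_{1..n} -> Prop) h m :
  (forall g, Gen g -> exists2 e, G e & g = 'X_[e]) -> gen_ideal Gen h ->
  m \in msupp h -> exists2 e, G e & (e <= m)%MM.
Proof.
move=> GenG [k [r [g [hg ->]]]] mh; apply: NNPP => hn; move: mh.
rewrite mcoeff_msupp raddf_sum /= big1 ?eqxx // => i _.
have [e Ge ->] := GenG _ (hg i).
apply: memN_msupp_eq0; rewrite (perm_mem (msuppMX _ _)).
by apply/negP => /mapP [m' _ em]; apply: hn; exists e; rewrite // em lem_addr.
Qed.

Section InitialIdeal.
Variables (n : nat) (F : fieldType) (le : rel 'X_{1..n}).
Hypothesis hto : term_order le.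
Implicit Types (f g : {mpoly F[n]}) (I J K M : {mpoly F[n]} -> Prop).

Lemma init_ideal_ideal I : is_ideal (init_ideal le I).
Proof. exact: gen_ideal_ideal. Qed.

Lemma init_lead I f m : I f -> is_lead le f m -> init_ideal le I 'X_[m].
Proof. by move=> If fm; apply: gen_ideal_gen; exists f, m. Qed.

Lemma init_mon I m : is_ideal I -> init_ideal le I 'X_[m] ->
  exists2 f, I f & is_lead le f m.
Proof.
move=> hI Im; have mX : m \in msupp ('X_[m] : {mpoly F[n]}) by rewrite msuppX inE.
have [|e [f If fe] le_em] :=
  monomial_ideal_supp (G := fun e => exists2 f, I f & is_lead le f e) _ Im mX.
  by move=> _ [f [e [If [fe ->]]]]; exists e => //; exists f.
exists (f * 'X_[m - e]); first exact: idealMr.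
by have := lead_MX hto (m - e) fe; rewrite submK.
Qed.

Lemma init_mono I J : subI I J -> subI (init_ideal le I) (init_ideal le J).
Proof.
move=> IJ; apply: gen_ideal_min; first exact: init_ideal_ideal.
by move=> _ [f [m [If [fm ->]]]]; apply: init_lead fm; apply: IJ.
Qed.

(* Macaulay: reduce f in K by an element of J with the same leading monomial, and induct on it. *)
Lemma init_subI J K : is_ideal J -> is_ideal K -> subI J K ->
  subI (init_ideal le K) (init_ideal le J) -> subI K J.
Proof.
move=> hJ hK hJK hin f; case: (eqVneq f 0) => [-> _|/(lead_ex hto) [a fa]].
  by case: hJ.
elim/(well_founded_induction (lt_mon_wf hto)): a f fa => a IH f fa Kf.
have [g Jg ga] := init_mon hJ (hin _ (init_lead Kf fa)).
set c := f@_a / g@_a; have Jcg : J (c *: g) by rewrite -mul_mpolyC; case: hJ => _ _; apply.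
have -> : f = (f - c *: g) + c *: g by rewrite subrK.
case: (hJ) => J0 JD _; apply: JD => //.
case: (eqVneq (f - c *: g) 0) => [-> //|/(lead_ex hto) [a' fa']].
apply: (IH a') => //; first exact: lead_cancel fa ga _ fa'.1.
by apply: idealB => //; apply: hJK.
Qed.

(* Hilbert's basis theorem, via Dickson's lemma on the leading monomials. *)
Lemma acc_mpoly : acc_ideals {mpoly F[n]}.
Proof.
move=> c hc hinc; apply: NNPP => hn.
have c_mono : {homo c : i j / (i <= j)%N >-> subI i j}.
  exact: homo_leq (fun _ _ h => h) (fun _ _ _ h1 h2 x hx => h2 x (h1 x hx)) hinc.
have step k : {m | init_ideal le (c k.+1) 'X_[m] /\ ~ init_ideal le (c k) 'X_[m]}.
  apply: constructive_indefinite_description; apply: NNPP => hn2; apply: hn.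
  exists k; apply: init_subI => //; apply: gen_ideal_min; first exact: init_ideal_ideal.
  move=> _ [f [m [Kf [fm ->]]]]; apply: NNPP => nm; apply: hn2.
  by exists m; split => //; apply: init_lead fm.
pose s k := sval (step k).
have [i [j [lt_ij le_s]]] := dickson s.
have [init_i _] := svalP (step i); have [_ ninit_j] := svalP (step j).
apply: ninit_j; rewrite -[sval (step j)](submK le_s) mpolyXD.
have [_ _ hM] := init_ideal_ideal (c j); apply: hM.
exact: init_mono (c_mono _ _ lt_ij) _ init_i.
Qed.

Lemma init_prod I J x y : init_ideal le I x -> init_ideal le J y ->
  init_ideal le (prod_ideal I J) (x * y).
Proof.
apply: gen_ideal_mul; first exact: init_ideal_ideal.
move=> _ _ [f [a [If [fa ->]]]] [g [b [Jg [gb ->]]]].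
by rewrite -mpolyXD; apply: (init_lead _ (lead_M hto fa gb)); apply: prod_ideal_mul.
Qed.

Lemma init_pow I t : subI (pow_ideal (init_ideal le I) t) (init_ideal le (pow_ideal I t)).
Proof.
elim: t => [|t IH] /= x.
  move=> _; rewrite -[x]mulr1 -(mpolyX0 n F); have [_ _] := init_ideal_ideal (fun=> True).
  by apply; apply: gen_ideal_gen; exists 'X_[0%MM], 0%MM; do 2!split => //; apply: lead_X.
case=> k [a [b [ha [hb ->]]]]; apply: ideal_sum; first exact: init_ideal_ideal.
by move=> i; apply: init_prod; [apply: IH|].
Qed.

Lemma sqfree_monomial_ideal_ideal M : sqfree_monomial_ideal M -> is_ideal M.
Proof.
by case=> G [_ e]; apply: is_ideal_eqI (gen_ideal_ideal _) => y; split => /e.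
Qed.

(* Split x into its terms divisible by a generator, which lie in M, and the rest x2;
   the leading monomial 2a of x2^2 is divisible by a squarefree generator, hence so is a. *)
Lemma sqfree_monomial_semiprime M : sqfree_monomial_ideal M -> semiprime M.
Proof.
move=> hsq; have hM := sqfree_monomial_ideal_ideal hsq; case: hsq => G [Gsq eM] x Mxx.
pose D m := exists2 e, G e & (e <= m)%MM.
pose Db m : bool := if excluded_middle_informative (D m) then true else false.
have DbP m : reflect (D m) (Db m).
  by rewrite /Db; case: excluded_middle_informative => h; constructor.
pose x1 := \sum_(m <- msupp x | Db m) x@_m *: 'X_[m].
pose x2 := \sum_(m <- msupp x | ~~ Db m) x@_m *: 'X_[m].
have ex : x = x1 + x2 by rewrite {1}[x]mpolyE (bigID Db).
have Mx1 : M x1.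
  case: (hM) => M0 MD MM; apply: (big_ind M) => //; move=> m /DbP [e Ge le_em].
  rewrite -mul_mpolyC -(submK le_em) mpolyXD mulrA; apply: MM.
  by apply/eM; apply: gen_ideal_gen; exists e.
have Mx2x2 : M (x2 * x2).
  have -> : x2 * x2 = x * x - x1 * (x + x2) by rewrite ex; ring.
  by apply: idealB => //; apply: idealMr.
case: (eqVneq x2 0) => [x20|/(lead_ex hto) [a x2a]]; first by rewrite ex x20 addr0.
have [x2a2 _] := lead_M hto x2a x2a.
have [|e Ge le_e2a] := monomial_ideal_supp (G := G) _ ((eM _).1 Mx2x2) x2a2.
  by move=> _ [e [Ge ->]]; exists e.
have Dba : Db a.
  apply/DbP; exists e => //; apply/mnm_lepP => i.
  by move/mnm_lepP: le_e2a => /(_ i); rewrite mnmDE; have := Gsq _ Ge i; lia.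
have := lead_coef_neq0 x2a; rewrite /x2 raddf_sum /= big1_seq ?eqxx //.
move=> m /andP [nDbm _]; rewrite mcoeffZ mcoeffX.
by case: (eqVneq m a) => [ema|]; [rewrite ema Dba in nDbm|rewrite mulr0].
Qed.

End InitialIdeal.

Section SquarefreeFamilies.
Variables (n : nat) (F : fieldType).
Implicit Types (M N : {mpoly F[n]} -> Prop).

Definition mon_of_set (A : {set 'I_n}) : 'X_{1..n} := [multinom (i \in A : nat) | i < n].

Definition sqfree_mons N : {set {set 'I_n}} :=
  [set A | if excluded_middle_informative (N 'X_[mon_of_set A]) then true else false].

Lemma sqfree_monsP N A : A \in sqfree_mons N <-> N 'X_[mon_of_set A].
Proof. by rewrite inE; case: excluded_middle_informative. Qed.

Lemma sqfree_mons_sub N N' : sqfree_monomial_ideal N -> is_ideal N' ->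
  sqfree_mons N \subset sqfree_mons N' -> subI N N'.
Proof.
move=> [G [Gsq eN]] hN' /subsetP sub x /eN; apply: gen_ideal_min => // _ [m [Gm ->]].
have em : m = mon_of_set [set i | m i != 0%N].
  apply/mnmP => i; rewrite /mon_of_set mnmE inE.
  by have := Gsq _ Gm i; case: (m i) => [|[|]].
rewrite em; apply/sqfree_monsP/sub/sqfree_monsP; rewrite -em.
by apply/eN/gen_ideal_gen; exists m.
Qed.

Lemma colon_avoid (T : Type) (P : T -> Prop) (N : T -> {mpoly F[n]} -> Prop) Q g
    (L : seq {set {set 'I_n}}) :
  is_prime Q -> (forall i, P i -> sqfree_monomial_ideal (N i)) ->
  (forall i, P i -> exists2 x, N i (x * g) & ~ Q x) ->
  exists2 u, ~ Q u & forall i, P i -> sqfree_mons (N i) \in L -> N i (u * g).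
Proof.
move=> hQ Nsq Nx; elim: L => [|A L [u nQu uL]]; first by exists 1; case: hQ.
have [[i0 [Pi0 i0A]]|noA] := classic (exists i, P i /\ sqfree_mons (N i) = A).
  have [x0 Nx0 nQx0] := Nx i0 Pi0.
  exists (x0 * u) => [|i Pi]; first exact: prime_notM.
  have hN := sqfree_monomial_ideal_ideal (Nsq i Pi).
  rewrite inE => /orP [/eqP iA|iL]; last by rewrite -mulrA mulrC; apply: idealMr hN _; apply: uL.
  rewrite mulrAC mulrC; case: (hN) => _ _; apply.
  by apply: (sqfree_mons_sub (Nsq i0 Pi0) hN) Nx0; rewrite i0A iA.
exists u => // i Pi; rewrite inE => /orP [/eqP iA|]; last exact: uL.
by case: noA; exists i.
Qed.

(* Finitely many squarefree monomial ideals exist, so a product of finitely many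
   witnesses handles the whole, possibly infinite, family. *)
Lemma sqfree_meet_colon (T : Type) (P : T -> Prop) (N : T -> {mpoly F[n]} -> Prop) Q g :
  is_prime Q -> (forall i, P i -> sqfree_monomial_ideal (N i)) ->
  (forall u, (forall i, P i -> N i (u * g)) -> Q u) ->
  exists i, P i /\ subI (colon (N i) g) Q.
Proof.
move=> hQ Nsq hmeet; apply: NNPP => hn.
have Nx i : P i -> exists2 x, N i (x * g) & ~ Q x.
  move=> Pi; apply: NNPP => hx; apply: hn; exists i; split => // x Nxg.
  by apply: NNPP => nQx; apply: hx; exists x.
have [u nQu uN] := colon_avoid (enum {set {set 'I_n}}) hQ Nsq Nx.
by apply/nQu/hmeet => i Pi; apply: uN; rewrite ?mem_enum.
Qed.

End SquarefreeFamilies.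

Section InitialIdealOfSymbolicPower.
Variables (n : nat) (F : fieldType) (le : rel 'X_{1..n}) (I : {mpoly F[n]} -> Prop).
Hypotheses (hto : term_order le) (hI : is_ideal I).
Hypothesis init_meet : eqI (init_ideal le I) (fun x => forall P, Min I P -> init_ideal le P x).

Lemma min_meet_sub : subI (min_meet I) I.
Proof.
apply: (init_subI hto hI (min_meet_ideal I)); first by move=> x Ix P [_ IP _]; apply: IP.
apply: gen_ideal_min; first exact: init_ideal_ideal.
by move=> _ [f [m [hf [fm ->]]]]; apply/init_meet => P hP; apply: init_lead (hf P hP) fm.
Qed.

Lemma init_symb_pow_sub t :
  sqfree_monomial_ideal (init_ideal le I) ->
  (forall P, Min I P -> sqfree_monomial_ideal (init_ideal le P)) ->
  (forall P, Min I P ->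
     eqI (init_ideal le (symb_pow P t)) (symb_pow (init_ideal le P) t)) ->
  subI (init_ideal le (symb_pow I t)) (symb_pow (init_ideal le I) t).
Proof.
move=> sqI sqP init_symbP; apply: gen_ideal_min; first exact: symb_pow_ideal.
move=> _ [f [m [If [fm ->]]]] Q [hQ [g eQ]].
have [P [hP PQ]] : exists P, Min I P /\ subI (colon (init_ideal le P) g) Q.
  by apply: sqfree_meet_colon hQ sqP _ => u hu; apply/eQ/init_meet.
have [hPP IP _] := hP.
apply: (symb_pow_colon (init_ideal_ideal _ _) (init_mono IP)) eQ PQ _ => //.
  exact: (@sqfree_monomial_semiprime _ _ _ hto _ sqI).
apply/init_symbP => //; apply: init_lead fm.
exact: symb_pow_sub_prime hPP IP (Min_Ass (acc_mpoly hto) hI min_meet_sub hP) _ If.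
Qed.

End InitialIdealOfSymbolicPower.

Theorem lemma3p17 (F : fieldType) (n : nat) (le : rel 'X_{1..n}) (t : nat)
  (I : {mpoly F[n]} -> Prop) :
  term_order le -> (0 < t)%N -> is_ideal I ->
  sqfree_monomial_ideal (init_ideal le I) ->
  (* (a) *) (forall P, Min I P -> sqfree_monomial_ideal (init_ideal le P)) ->
  (* (b) *) eqI (symb_pow (init_ideal le I) t) (pow_ideal (init_ideal le I) t) ->
  (* (c) *) (forall P, Min I P ->
               eqI (init_ideal le (symb_pow P t)) (symb_pow (init_ideal le P) t)) ->
  (* (d) *) eqI (init_ideal le I)
               (fun x => forall P, Min I P -> init_ideal le P x) ->
  eqI (symb_pow I t) (pow_ideal I t).
Proof.
move=> hto _ hI sqI sqP symb_init_pow init_symbP init_meet x.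
split; last exact: pow_sub_symb.
move: x; apply: (init_subI hto (pow_ideal_ideal I t) (symb_pow_ideal I t)).
  exact: pow_sub_symb.
move=> x /(init_symb_pow_sub hto hI init_meet sqI sqP init_symbP) /symb_init_pow.
exact: init_pow.
Qed.
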